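(* Let $\mathcal M$ be a Hilbert space of $\mathcal Y$-valued functions whose elements belong to $\mathcal H_{\mathcal Y}(k_d)$, and assume $\mathcal M$ is invariant under $M^*_{\lambda_j}$ for $j=1,\dots,d$. (1) If $\sum_{j=1}^d\|M^*_{\lambda_j}f\|^2_{\mathcal M}\le\|f\|^2_{\mathcal M}-\|f(0)\|^2_{\mathcal Y}$ for every $f\in\mathcal M$, then $\mathcal M=\operatorname{Ran}\widehat{\mathcal O}^{\mathbf a}_{C,\mathbf A}$ for a contractive pair $(C,\mathbf A)$ with $\mathbf A=(A_1,\dots,A_d)$ commutative which is exactly observable with respect to $\mathcal M$. In particular $\mathcal M$ is contractively included in $\mathcal H_{\mathcal Y}(k_d)$. (2) If $\sum_{j=1}^d\|M^*_{\lambda_j}f\|^2_{\mathcal M}=\|f\|^2_{\mathcal M}-\|f(0)\|^2_{\mathcal Y}$ for every $f\in\mathcal M$, then $\mathcal M=\operatorname{Ran}\widehat{\mathcal O}^{\mathbf a}_{C,\mathbf A}$ for an isometric pair $(C,\mathbf A)$ with $\mathbf A$ commutative which is exactly observable with respect to $\mathcal M$; $\mathcal M$ is contractively included in $\mathcal H_{\mathcal Y}(k_d)$, and it is isometrically included in $\mathcal H_{\mathcal Y}(k_d)$ if and only if $$\lim_{N\to\infty}\sum_{\mathbf n\in\mathbb Z^d_+,|\mathbf n|=N}\frac{N!}{\mathbf n!}\|(\mathbf M^*_{\boldsymbol\lambda})^{\mathbf n}f\|^2_{\mathcal M}=0\quad\text{for every }f\in\mathcal M.$$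
   Context: For $\mathbf n\in\mathbb Z^d_+$: $|\mathbf n|=\sum n_k$, $\mathbf n!=\prod n_k!$, $\boldsymbol\lambda^{\mathbf n}=\prod\lambda_k^{n_k}$. Arveson space $\mathcal H_{\mathcal Y}(k_d)$: functions $\sum_{\mathbf n}f_{\mathbf n}\boldsymbol\lambda^{\mathbf n}$ on the unit ball $\mathbb B^d$ with $\|f\|^2=\sum_{\mathbf n}\frac{\mathbf n!}{|\mathbf n|!}\|f_{\mathbf n}\|^2_{\mathcal Y}<\infty$; $M_{\lambda_j}$: multiplication by $\lambda_j$ there; $M^*_{\lambda_j}$: its adjoint in $\mathcal H_{\mathcal Y}(k_d)$; $(\mathbf M^*_{\boldsymbol\lambda})^{\mathbf n}=(M^*_{\lambda_1})^{n_1}\cdots(M^*_{\lambda_d})^{n_d}$. For a commuting tuple $\mathbf A$ on a Hilbert space $\mathcal X$ and $C\in\mathcal L(\mathcal X,\mathcal Y)$, $\widehat{\mathcal O}^{\mathbf a}_{C,\mathbf A}x=\sum_{\mathbf n}\frac{|\mathbf n|!}{\mathbf n!}(C\mathbf A^{\mathbf n}x)\boldsymbol\lambda^{\mathbf n}=C(I-\sum_j\lambda_jA_j)^{-1}x$. Contractive pair: $C^*C+\sum_jA_j^*A_j\le I$; isometric: equality. ''Exactly observable with respect to $\mathcal M$'' means that $\widehat{\mathcal O}^{\mathbf a}_{C,\mathbf A}$, regarded as an operator from $\mathcal X$ into $\mathcal M$, is bounded and bounded below. $\mathcal M$ is contractively (resp. isometrically) included in $\mathcal H_{\mathcal Y}(k_d)$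 if $\|f\|_{\mathcal H_{\mathcal Y}(k_d)}\le\|f\|_{\mathcal M}$ (resp. $=$) for $f\in\mathcal M$. *)

From HB Require Import structures.
From mathcomp Require Import all_boot all_order all_algebra.
From mathcomp Require Import all_classical all_reals all_analysis.
From mathcomp Require Import complex.

Set Implicit Arguments.
Unset Strict Implicit.
Unset Printing Implicit Defensive.

Import Order.TTheory GRing.Theory Num.Theory numFieldNormedType.Exports.
Local Open Scope ring_scope.
Local Open Scope complex_scope.

Section Defs.
Variable R : realType.
Local Notation C := (R[i]).

Definition is_inner_product (V : lmodType C) (ip : V -> V -> C) : Prop :=
  [/\ (forall (a : C) (x y z : V), ip (a *: x + y) z = a * ip x z + ip y z),
      (forall x y : V, ip y x = conjc (ip x y)),
      (forall x : V, 0 <= ip x x) &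
      (forall x : V, ip x x = 0 -> x = 0)].

Definition hnorm (V : Type) (ip : V -> V -> C) (x : V) : R :=
  Num.sqrt (complex.Re (ip x x)).

Definition ip_complete (V : lmodType C) (ip : V -> V -> C) : Prop :=
  forall u : nat -> V,
    (forall e : R, 0 < e -> exists N : nat, forall m n : nat,
        (N <= m)%N -> (N <= n)%N -> hnorm ip (u m - u n) < e) ->
    exists v : V, forall e : R, 0 < e -> exists N : nat, forall n : nat,
        (N <= n)%N -> hnorm ip (u n - v) < e.

Definition is_hilbert (V : lmodType C) (ip : V -> V -> C) : Prop :=
  is_inner_product ip /\ ip_complete ip.

Definition bounded_op (V W : lmodType C) (ipV : V -> V -> C) (ipW : W -> W -> C)
  (T : V -> W) : Prop :=
  exists K : R, forall x : V, hnorm ipW (T x) <= K * hnorm ipV x.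

Variable d : nat.

Definition mi := 'I_d -> nat.
Definition mi_abs (n : mi) : nat := (\sum_(i < d) n i)%N.
Definition mi_fact (n : mi) : nat := (\prod_(i < d) (n i)`!)%N.
Definition mi_succ (j : 'I_d) (n : mi) : mi := fun i => (n i + (i == j))%N.

Definition deg_sum (N : nat) (F : mi -> R) : R :=
  \sum_(m : {ffun 'I_d -> 'I_N.+1} | (\sum_(i < d) (m i : nat))%N == N)
     F (fun i => nat_of_ord (m i)).

Definition arv_w (n : mi) : R := (mi_fact n)%:R / (mi_abs n)`!%:R.

(* ---------- the Arveson space H_Y(k_d) ----------
   A function sum_n f_n lambda^n on the ball is represented by its family of
   Taylor coefficients f : mi -> Y. *)
Variable Y : lmodType C.
Variable ipY : Y -> Y -> C.

Definition arv_terms (f : mi -> Y) (N : nat) : R :=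
  deg_sum N (fun n => arv_w n * hnorm ipY (f n) ^+ 2).

Definition in_arveson (f : mi -> Y) : Prop :=
  exists B : R, forall K : nat, \sum_(N < K) arv_terms f N <= B.

Definition arv_norm (f : mi -> Y) : R :=
  Num.sqrt (limn (series (arv_terms f))).

(* M^*_{lambda_j}, the adjoint in H_Y(k_d) of multiplication by lambda_j:
   (M^*_{lambda_j} f)_n = (w(n+e_j)/w(n)) f_{n+e_j}  (w = Arveson weight) *)
Definition Mstar (j : 'I_d) (f : mi -> Y) : mi -> Y :=
  fun n => ((arv_w (mi_succ j n) / arv_w n) : R)%:C *: f (mi_succ j n).

Definition Mstar_pow (n : mi) : (mi -> Y) -> (mi -> Y) :=
  foldr (fun j g => iter (n j) (Mstar j) \o g) id (enum 'I_d).

Definition eval0 (f : mi -> Y) : Y := f (fun _ => 0%N).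

Record fun_hilbert := FunHilbert {
  fh_mem : (mi -> Y) -> Prop;
  fh_ip : (mi -> Y) -> (mi -> Y) -> C;
  fh_zero : fh_mem (fun _ => 0);
  fh_lin : forall (a : C) f g, fh_mem f -> fh_mem g ->
             fh_mem (fun n => a *: f n + g n);
  fh_ip_lin : forall (a : C) f g h, fh_mem f -> fh_mem g -> fh_mem h ->
       fh_ip (fun n => a *: f n + g n) h = a * fh_ip f h + fh_ip g h;
  fh_ip_sym : forall f g, fh_mem f -> fh_mem g -> fh_ip g f = conjc (fh_ip f g);
  fh_ip_pos : forall f, fh_mem f -> 0 <= fh_ip f f;
  fh_ip_def : forall f, fh_mem f -> fh_ip f f = 0 -> f = (fun _ => 0);
  fh_complete : forall u : nat -> (mi -> Y), (forall k, fh_mem (u k)) ->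
    (forall e : R, 0 < e -> exists N : nat, forall m n : nat,
        (N <= m)%N -> (N <= n)%N -> hnorm fh_ip (fun i => u m i - u n i) < e) ->
    exists v, fh_mem v /\ forall e : R, 0 < e -> exists N : nat, forall n : nat,
        (N <= n)%N -> hnorm fh_ip (fun i => u n i - v i) < e
}.

Section Obs.
Variables (X : lmodType C) (A : 'I_d -> X -> X) (Cop : X -> Y).

Definition op_pow (n : mi) : X -> X :=
  foldr (fun j g => iter (n j) (A j) \o g) id (enum 'I_d).

Definition obs_op (x : X) : mi -> Y :=
  fun n => (((mi_abs n)`!%:R / (mi_fact n)%:R : R)%:C) *: Cop (op_pow n x).
End Obs.

Definition commuting (X : Type) (A : 'I_d -> X -> X) : Prop :=
  forall i j x, A i (A j x) = A j (A i x).

(* C^*C + sum_j A_j^*A_j <= I *)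
Definition contractive_pair (X : lmodType C) (ipX : X -> X -> C)
  (Cop : X -> Y) (A : 'I_d -> X -> X) : Prop :=
  forall x, hnorm ipY (Cop x) ^+ 2 + \sum_(j < d) hnorm ipX (A j x) ^+ 2
            <= hnorm ipX x ^+ 2.

(* C^*C + sum_j A_j^*A_j = I, i.e. <(C^*C + sum A_j^*A_j) x, y> = <x, y> *)
Definition isometric_pair (X : lmodType C) (ipX : X -> X -> C)
  (Cop : X -> Y) (A : 'I_d -> X -> X) : Prop :=
  forall x y, ipY (Cop x) (Cop y) + \sum_(j < d) ipX (A j x) (A j y) = ipX x y.

Definition exactly_observable (M : fun_hilbert) (X : lmodType C)
  (ipX : X -> X -> C) (Cop : X -> Y) (A : 'I_d -> X -> X) : Prop :=
  (forall x, fh_mem M (obs_op A Cop x)) /\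
  exists c1 c2 : R, 0 < c1 /\ 0 < c2 /\ forall x,
     c1 * hnorm ipX x <= hnorm (fh_ip M) (obs_op A Cop x) /\
     hnorm (fh_ip M) (obs_op A Cop x) <= c2 * hnorm ipX x.

Definition range_obs (M : fun_hilbert) (X : lmodType C)
  (Cop : X -> Y) (A : 'I_d -> X -> X) : Prop :=
  forall f, fh_mem M f <-> exists x, f = obs_op A Cop x.

Definition contractively_included (M : fun_hilbert) : Prop :=
  forall f, fh_mem M f -> arv_norm f <= hnorm (fh_ip M) f.

Definition isometrically_included (M : fun_hilbert) : Prop :=
  forall f, fh_mem M f -> arv_norm f = hnorm (fh_ip M) f.

End Defs.

From HB Require Import structures.
From mathcomp Require Import all_boot all_order all_algebra.
From mathcomp Require Import all_classical all_reals all_analysis.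
From mathcomp Require Import complex.
From mathcomp Require Import ring lra zify.
Import Order.TTheory GRing.Theory Num.Theory numFieldNormedType.Exports.
Local Open Scope ring_scope.
Local Open Scope complex_scope.
Local Open Scope classical_set_scope.
Set Implicit Arguments.
Unset Strict Implicit.
Unset Printing Implicit Defensive.

(* Realize M by its own backward shift: X is M, A_j is the restriction of
   S_j := M^*_{lambda_j} to M and C f = f(0).  Since (S^n f)(0) = (n!/|n|!) f_n,
   the observability operator of (C, A) is the identity of M, which gives exact
   observability and Ran = M at once; the hypothesis on M says that the defect
   D f = ||f||^2 - ||f(0)||^2 - sum_j ||S_j f||^2 is nonnegative (resp. zero),
   i.e. that (C, A) is contractive (resp. isometric, after polarization).
   Applying ||g||^2 = ||g(0)||^2 + sum_j ||S_j g||^2 + D g to g = S^n f and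
   summing over the multinomial layers |n| = N gives the energy identity
     sum_{k<N} sum_{|n|=k} (n!/k!) ||f_n||^2 + sum_{|n|=N} (N!/n!) ||S^n f||^2
       + sum_{k<N} sum_{|n|=k} (k!/n!) D(S^n f) = ||f||_M^2.
   When D >= 0 the first sum, whose limit is ||f||^2 in H_Y(k_d), stays below
   ||f||_M^2; when D = 0 equality holds in the limit iff the middle term
   tends to 0. *)

Section MultiIndex.
Variable d : nat.
Implicit Types (n m : mi d) (j : 'I_d).

Definition mi0 : mi d := fun _ => 0%N.
Definition mi_add n m : mi d := fun i => (n i + m i)%N.
Definition mi_axis j (k : nat) : mi d := fun i => (k * (i == j))%N.

Lemma mi_addC : commutative mi_add.
Proof. by move=> n m; apply: funext => i; rewrite /mi_add addnC. Qed.

Lemma mi_addA : associative mi_add.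
Proof. by move=> n m k; apply: funext => i; rewrite /mi_add addnA. Qed.

Lemma mi_add0 : right_id mi0 mi_add.
Proof. by move=> n; apply: funext => i; rewrite /mi_add addn0. Qed.

Lemma mi_succE j n : mi_succ j n = mi_add n (mi_axis j 1).
Proof. by apply: funext => i; rewrite /mi_add /mi_axis /mi_succ mul1n. Qed.

Lemma mi_axis0 j : mi_axis j 0 = mi0.
Proof. by apply: funext => i; rewrite /mi_axis mul0n. Qed.

Lemma mi_axisS j k : mi_axis j k.+1 = mi_add (mi_axis j k) (mi_axis j 1).
Proof. by apply: funext => i; rewrite /mi_add /mi_axis mulSn addnC mul1n. Qed.

Lemma mi_abs0 : mi_abs mi0 = 0%N.
Proof. exact: big1. Qed.

Lemma mi_fact0 : mi_fact mi0 = 1%N.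
Proof. exact: big1. Qed.

Lemma mi_fact_gt0 n : (0 < mi_fact n)%N.
Proof. by apply: prodn_gt0 => i; apply: fact_gt0. Qed.

Lemma mi_fact_succ j n : mi_fact (mi_succ j n) = (mi_fact n * (n j).+1)%N.
Proof.
rewrite /mi_fact (bigD1 j) //= [in RHS](bigD1 j) //= /mi_succ eqxx addn1.
rewrite (eq_bigr (fun i => (n i)`!)) => [|i /negbTE ->]; last by rewrite addn0.
by rewrite factS; ring.
Qed.

End MultiIndex.

Section WeightedShift.
Variables (R : realType) (d : nat) (Y : lmodType R[i]).
Implicit Types (n m k : mi d) (f : mi d -> Y).

Lemma arv_w_gt0 n : 0 < arv_w R n.
Proof. by rewrite /arv_w divr_gt0 // ltr0n ?mi_fact_gt0 ?fact_gt0. Qed.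

Lemma arv_w0 : arv_w R (@mi0 d) = 1.
Proof. by rewrite /arv_w mi_fact0 mi_abs0 divr1. Qed.

Definition wshift n f : mi d -> Y :=
  fun m => (arv_w R (mi_add m n) / arv_w R m)%:C *: f (mi_add m n).

Lemma wshift0 f : wshift (@mi0 d) f = f.
Proof.
apply: funext => m; rewrite /wshift mi_add0 divrr ?scale1r //.
by rewrite unitfE gt_eqF ?arv_w_gt0.
Qed.

Lemma wshift_comp n k f : wshift n (wshift k f) = wshift (mi_add k n) f.
Proof.
apply: funext => m; rewrite /wshift scalerA -rmorphM -mi_addA [mi_add n k]mi_addC.
congr (_%:C *: _); have := arv_w_gt0 (mi_add m n).
by rewrite lt0r => /andP [wn0 _]; field; rewrite wn0 gt_eqF ?arv_w_gt0.
Qed.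

Lemma Mstar_wshift j f : Mstar j f = wshift (mi_axis j 1) f.
Proof. by apply: funext => m; rewrite /Mstar /wshift mi_succE. Qed.

Lemma iter_Mstar j (k : nat) f : iter k (Mstar j) f = wshift (mi_axis j k) f.
Proof.
elim: k => [|k IHk] /=; first by rewrite mi_axis0 wshift0.
by rewrite IHk Mstar_wshift wshift_comp -mi_axisS.
Qed.

Lemma foldr_iter_Mstar n (s : seq 'I_d) f :
  foldr (fun j g => iter (n j) (Mstar j) \o g) id s f =
  wshift (fun i => count_mem i s * n i)%N f.
Proof.
elim: s => [|j s IHs] /=.
  by rewrite -{1}(wshift0 f); congr wshift; apply: funext.
rewrite IHs iter_Mstar wshift_comp; congr wshift; apply: funext => i.
rewrite /mi_add /mi_axis mulnDl addnC eq_sym.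
by case: eqP => [->|_]; rewrite ?muln1 ?mul1n ?muln0 ?mul0n.
Qed.

Lemma Mstar_powE n f : Mstar_pow n f = wshift n f.
Proof.
rewrite /Mstar_pow foldr_iter_Mstar; congr wshift; apply: funext => i.
by rewrite count_uniq_mem ?enum_uniq // mem_enum mul1n.
Qed.

Lemma Mstar_pow0 f : Mstar_pow (@mi0 d) f = f.
Proof. by rewrite Mstar_powE wshift0. Qed.

Lemma Mstar_Mstar_pow j n f : Mstar j (Mstar_pow n f) = Mstar_pow (mi_succ j n) f.
Proof. by rewrite !Mstar_powE Mstar_wshift wshift_comp mi_succE. Qed.

Lemma eval0_Mstar_pow n f : eval0 (Mstar_pow n f) = (arv_w R n)%:C *: f n.
Proof.
rewrite Mstar_powE /eval0 /wshift arv_w0 divr1.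
by rewrite [mi_add _ n]mi_addC -/(@mi0 d) mi_add0.
Qed.

Lemma Mstar_comm i j f : Mstar i (Mstar j f) = Mstar j (Mstar i f).
Proof. by rewrite !Mstar_wshift !wshift_comp mi_addC. Qed.

Lemma Mstar_linear j : linear (@Mstar R d Y j).
Proof.
move=> a f g; apply: funext => n.
by rewrite /Mstar !fctE scalerDr !scalerA mulrC.
Qed.

End WeightedShift.

Section DegreeSums.
Variables (R : realType) (d : nat).
Implicit Types (F G : mi d -> R).

Lemma deg_sum0 F : deg_sum 0 F = F (@mi0 d).
Proof.
have ord1_mi0 (m : {ffun 'I_d -> 'I_1}) : (fun i => nat_of_ord (m i)) = @mi0 d.
  by apply: funext => i; case: (m i) => -[].
rewrite /deg_sum (eq_bigr (fun _ => F (@mi0 d))) => [|m _]; last by rewrite ord1_mi0.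
rewrite (eq_bigl predT) => [|m]; last by rewrite /= big1 // => i _; case: (m i) => -[].
by rewrite sumr_const card_ffun !card_ord exp1n mulr1n.
Qed.

Lemma eq_deg_sum N F G :
  (forall n, mi_abs n = N -> F n = G n) -> deg_sum N F = deg_sum N G.
Proof. by move=> eFG; apply: eq_bigr => m /eqP; apply: eFG. Qed.

Lemma deg_sum_ge0 N F : (forall n, mi_abs n = N -> 0 <= F n) -> 0 <= deg_sum N F.
Proof. by move=> F_ge0; apply: sumr_ge0 => m /eqP; apply: F_ge0. Qed.

Lemma deg_sumD N F G : deg_sum N (F \+ G) = deg_sum N F + deg_sum N G.
Proof. exact: big_split. Qed.

Lemma deg_sum_sumr N (F : 'I_d -> mi d -> R) :
  deg_sum N (fun n => \sum_(j < d) F j n) = \sum_(j < d) deg_sum N (F j).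
Proof. exact: exchange_big. Qed.

Lemma deg_sum_succ (j : 'I_d) N G :
  deg_sum N (fun n => G (mi_succ j n)) =
  \sum_(m : {ffun 'I_d -> 'I_N.+2} |
        ((\sum_(i < d) (m i : nat))%N == N.+1) && (0 < m j)%N)
     G (fun i => nat_of_ord (m i)).
Proof.
pose up (n : {ffun 'I_d -> 'I_N.+1}) : {ffun 'I_d -> 'I_N.+2} :=
  [ffun i => inord (n i + (i == j))].
pose down (m : {ffun 'I_d -> 'I_N.+2}) : {ffun 'I_d -> 'I_N.+1} :=
  [ffun i => inord (m i - (i == j))].
have upE n i : (up n i : nat) = (n i + (i == j))%N.
  by rewrite ffunE inordK //; have := ltn_ord (n i); case: (i == j) => /=; lia.
have downK : cancel up down.
  move=> n; apply/ffunP => i; apply: val_inj; rewrite /= ffunE upE inordK.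
    by case: (i == j) => /=; lia.
  by have := ltn_ord (n i); case: (i == j) => /=; lia.
have sum_up n : (\sum_(i < d) up n i = \sum_(i < d) n i + 1)%N.
  rewrite (eq_bigr _ (fun i _ => upE n i)) big_split /=; congr addn.
  by rewrite (bigD1 j) //= eqxx big1 // => i /negbTE ->.
rewrite [RHS](reindex_onto up down) /=; last first.
  move=> m /andP [/eqP sum_m m_j_gt0]; apply/ffunP => i; apply: val_inj.
  have m_i_le : (m i - (i == j) < N.+1)%N.
    case: (eqVneq i j) => [->|ij] /=; first by have := ltn_ord (m j); lia.
    have : (m i + m j <= \sum_(k < d) (m k : nat))%N.
      rewrite (bigD1 j) //= (bigD1 i) //= 1?eq_sym // addnA [(m j + _)%N]addnC.
      exact: leq_addr.
    by rewrite sum_m; lia.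
  rewrite /= upE ffunE inordK //.
  by case: (eqVneq i j) => [->|_] /=; lia.
apply: eq_big => [n|n _].
  by rewrite downK eqxx sum_up upE eqxx !addn1 eqSS /= !andbT.
by congr G; apply: funext => i; rewrite upE.
Qed.

Lemma deg_sum_multinomialS N (H : mi d -> R) :
  deg_sum N.+1 (fun m => N.+1`!%:R / (mi_fact m)%:R * H m) =
  \sum_(j < d) deg_sum N (fun n => N`!%:R / (mi_fact n)%:R * H (mi_succ j n)).
Proof.
(* (N+1)!/m! = sum_j N! m_j / m! when |m| = N + 1, and N!/n! = N! m_j / m! for
   m = n + e_j *)
pose G (j : 'I_d) (m : mi d) : R := (N`! * m j)%:R / (mi_fact m)%:R * H m.
have shift_G j : deg_sum N (fun n => N`!%:R / (mi_fact n)%:R * H (mi_succ j n)) =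
    deg_sum N (fun n => G j (mi_succ j n)).
  apply: eq_deg_sum => n _; rewrite /G mi_fact_succ /mi_succ /= eqxx addn1 !natrM.
  have fact_neq0 : (mi_fact n)%:R != 0 :> R by rewrite pnatr_eq0 -lt0n mi_fact_gt0.
  by congr (_ * _); field; rewrite fact_neq0 andbT addrC natr1 pnatr_eq0.
rewrite (eq_bigr _ (fun j _ => shift_G j)).
under eq_bigr => j _ do rewrite deg_sum_succ big_mkcondr /=.
rewrite exchange_big /=; apply: eq_bigr => m /eqP sum_m.
rewrite (eq_bigr (fun j => G j (fun i => nat_of_ord (m i)))) => [|j _]; last first.
  by case: ifP => // /negbT; rewrite -leqNgt leqn0 /G => /eqP ->; rewrite muln0 !mul0r.
by rewrite /G -!mulr_suml -natr_sum -big_distrr /= sum_m factS mulnC.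
Qed.

End DegreeSums.

Section LinearInFirstArgument.
Variables (R : realType) (V : lmodType R[i]) (B : V -> V -> R[i]).
Hypothesis BDZl : forall a x y z, B (a *: x + y) z = a * B x z + B y z.

Lemma form0l z : B 0 z = 0.
Proof.
apply: (@addrI _ (B 0 z)); rewrite addr0.
by have := BDZl 1 0 0 z; rewrite scale1r !addr0 mul1r => /esym.
Qed.

Lemma formZl a x z : B (a *: x) z = a * B x z.
Proof. by rewrite -[a *: x]addr0 BDZl form0l addr0. Qed.

Lemma formDl x y z : B (x + y) z = B x z + B y z.
Proof. by rewrite -[x in LHS]scale1r BDZl mul1r. Qed.

Hypothesis B_hermitian : forall x y, B y x = conjc (B x y).

Lemma hermitian_form_eq0 : (forall x, B x x = 0) -> forall x y, B x y = 0.
Proof.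
(* B (x + y) (x + y) = 0 kills Re (B x y); replacing x by 'i x kills Im (B x y). *)
move=> B_diag0.
have ReB0 x y : B x y + conjc (B x y) = 0.
  have := B_diag0 (x + y); rewrite formDl B_hermitian formDl B_diag0 add0r.
  rewrite [B y (x + y)]B_hermitian formDl B_diag0 addr0 (B_hermitian x y).
  by rewrite conjcK addrC.
move=> x y; have := ReB0 x y; have := ReB0 ('i *: x) y; rewrite formZl.
case: (B x y) => a b /eqP + /eqP; rewrite !eq_complex /=.
move=> /andP [/eqP ha _] /andP [/eqP hb _].
by apply/eqP; rewrite eq_complex /=; apply/andP; split; apply/eqP; lra.
Qed.

End LinearInFirstArgument.

Lemma hnorm_ge0 (R : realType) (V : Type) (ip : V -> V -> R[i]) x : 0 <= hnorm ip x.
Proof. exact: sqrtr_ge0. Qed.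

Section InnerProduct.
Variables (R : realType) (V : lmodType R[i]) (ip : V -> V -> R[i]).
Hypothesis ip_inner : is_inner_product ip.

Lemma sqr_hnormC x : (hnorm ip x ^+ 2)%:C = ip x x.
Proof.
case: ip_inner => _ _ ip_ge0 _; have := ip_ge0 x.
rewrite /hnorm; case: (ip x x) => a b; rewrite lecE /= => /andP [/eqP -> a_ge0].
by rewrite sqr_sqrtr.
Qed.

Lemma sqr_hnormZ_real (a : R) x : hnorm ip (a%:C *: x) ^+ 2 = a ^+ 2 * hnorm ip x ^+ 2.
Proof.
case: ip_inner => ipDZl ip_herm _ _; apply: complexI.
rewrite sqr_hnormC rmorphM /= sqr_hnormC (formZl ipDZl) ip_herm (formZl ipDZl).
rewrite rmorphM /= -ip_herm.
have -> : (a -i* 0) = a%:C by apply/eqP; rewrite eq_complex /= oppr0 !eqxx.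
by rewrite expr2 rmorphM mulrA.
Qed.

End InnerProduct.

Section NonnegativeSeries.
Variable R : realType.
Implicit Types (u : R ^nat).

Lemma nneg_series_bounded_cvg u (B : R) : (forall k, 0 <= u k) ->
  (forall N, \sum_(k < N) u k <= B) -> cvgn (series u) /\ limn (series u) <= B.
Proof.
move=> u_ge0 u_le.
have series_le N : series u N <= B by rewrite seriesEord; exact: u_le.
have series_nd : {homo series u : n m / (n <= m)%N >-> n <= m}.
  move=> n m nm; rewrite /series /= [X in _ <= X](big_cat_nat (leq0n n) nm) /=.
  by rewrite lerDl sumr_ge0.
have cvg_series : cvgn (series u).
  by apply: (cvgP _ (nondecreasing_cvgn series_nd _)); exists B => _ [n _ <-].
by split => //; apply: limr_le => //; apply: nearW.
Qed.

Lemma sqrt_limn_series_eq_iff_cvg0 u (T : R ^nat) (h : R) : (forall k, 0 <= u k) ->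
  0 <= h -> (forall N, 0 <= T N) -> (forall N, \sum_(k < N) u k + T N = h ^+ 2) ->
  Num.sqrt (limn (series u)) = h <-> T @ \oo --> 0.
Proof.
move=> u_ge0 h_ge0 T_ge0 u_T.
have [cvg_series _] : cvgn (series u) /\ limn (series u) <= h ^+ 2.
  by apply: nneg_series_bounded_cvg => // N; rewrite -(u_T N) lerDl.
have TE : T = (fun=> h ^+ 2) - series u.
  apply: funext => N; rewrite [RHS](_ : _ = h ^+ 2 - series u N) //.
  by rewrite seriesEord /= -(u_T N); ring.
have lim_ge0 : 0 <= limn (series u).
  apply: limr_ge => //; apply: nearW => N; rewrite seriesEord.
  exact: sumr_ge0.
split=> [sqrt_lim | T0].
  have -> : 0 = h ^+ 2 - limn (series u) by rewrite -sqrt_lim sqr_sqrtr ?subrr.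
  by rewrite TE; apply: cvgB => //; apply: cvg_cst.
have : series u @ \oo --> h ^+ 2 - 0.
  have -> : series u = (fun=> h ^+ 2) - T by rewrite TE opprB addrC subrK.
  exact: cvgB (cvg_cst _) T0.
by rewrite subr0 => /cvg_lim -> //; rewrite sqrtr_sqr ger0_norm.
Qed.

End NonnegativeSeries.

Lemma bounded_op_of_sqr_le (R : realType) (V W : lmodType R[i])
    (ipV : V -> V -> R[i]) (ipW : W -> W -> R[i]) (T : V -> W) :
  (forall x, hnorm ipW (T x) ^+ 2 <= hnorm ipV x ^+ 2) -> bounded_op ipV ipW T.
Proof.
by move=> T_le; exists 1 => x; rewrite mul1r -ler_sqr ?nnegrE ?hnorm_ge0.
Qed.

Section EnergyIdentity.
Variables (R : realType) (d : nat) (Y : lmodType R[i]) (ipY : Y -> Y -> R[i]).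
Variable M : fun_hilbert d Y.
Implicit Types (f : mi d -> Y) (N : nat).

Local Notation normM := (hnorm (fh_ip M)).

Definition defect f : R :=
  normM f ^+ 2 - hnorm ipY (eval0 f) ^+ 2 - \sum_(j < d) normM (Mstar j f) ^+ 2.

Definition mnorm_tail N f : R :=
  deg_sum N (fun n => N`!%:R / (mi_fact n)%:R * normM (Mstar_pow n f) ^+ 2).

Definition defect_layer N f : R :=
  deg_sum N (fun n => N`!%:R / (mi_fact n)%:R * defect (Mstar_pow n f)).

Lemma arv_terms_ge0 f N : 0 <= arv_terms ipY f N.
Proof.
apply: deg_sum_ge0 => n _.
by rewrite mulr_ge0 ?exprn_ge0 ?hnorm_ge0 ?ltW ?arv_w_gt0.
Qed.

Lemma mnorm_tail_ge0 N f : 0 <= mnorm_tail N f.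
Proof.
by apply: deg_sum_ge0 => n _; rewrite mulr_ge0 ?divr_ge0 ?ler0n ?exprn_ge0 ?hnorm_ge0.
Qed.

Hypothesis ipY_inner : is_inner_product ipY.

Lemma deg_sum_eval0_Mstar_pow N f :
  deg_sum N (fun n =>
    N`!%:R / (mi_fact n)%:R * hnorm ipY (eval0 (Mstar_pow n f)) ^+ 2) =
  arv_terms ipY f N.
Proof.
apply: eq_deg_sum => n abs_n; rewrite eval0_Mstar_pow sqr_hnormZ_real // /arv_w abs_n.
by field; rewrite !pnatr_eq0 -!lt0n fact_gt0 mi_fact_gt0.
Qed.

Lemma mnorm_tailS N f :
  mnorm_tail N f = arv_terms ipY f N + mnorm_tail N.+1 f + defect_layer N f.
Proof.
rewrite /mnorm_tail /defect_layer -deg_sum_eval0_Mstar_pow.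
rewrite (deg_sum_multinomialS N (fun m => normM (Mstar_pow m f) ^+ 2)).
have shift_layer j :
    deg_sum N (fun n =>
      N`!%:R / (mi_fact n)%:R * normM (Mstar_pow (mi_succ j n) f) ^+ 2) =
    deg_sum N (fun n =>
      N`!%:R / (mi_fact n)%:R * normM (Mstar j (Mstar_pow n f)) ^+ 2).
  by apply: eq_deg_sum => n _; rewrite Mstar_Mstar_pow.
rewrite (eq_bigr _ (fun j _ => shift_layer j)) -deg_sum_sumr -!deg_sumD.
by apply: eq_deg_sum => n _; rewrite /defect /= -mulr_sumr; ring.
Qed.

Lemma energy_identity N f :
  \sum_(k < N) arv_terms ipY f k + mnorm_tail N f + \sum_(k < N) defect_layer k f =
  normM f ^+ 2.
Proof.
elim: N => [|N IHN].
  rewrite !big_ord0 /mnorm_tail deg_sum0 mi_fact0 fact0 divr1 mul1r Mstar_pow0.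
  by rewrite add0r addr0.
by rewrite !big_ord_recr /= -IHN (mnorm_tailS N f); ring.
Qed.

Hypothesis M_Mstar : forall j f, fh_mem M f -> fh_mem M (Mstar j f).

Lemma mem_Mstar_pow n f : fh_mem M f -> fh_mem M (Mstar_pow n f).
Proof.
move=> fM; rewrite /Mstar_pow; elim: (enum 'I_d) => //= j s IHs.
by elim: (n j) => //= k IHk; apply: M_Mstar.
Qed.

Section ContractiveCase.
Hypothesis defect_ge0 : forall f, fh_mem M f -> 0 <= defect f.

Lemma defect_layer_ge0 N f : fh_mem M f -> 0 <= defect_layer N f.
Proof.
move=> fM; apply: deg_sum_ge0 => n _; rewrite mulr_ge0 ?divr_ge0 ?ler0n //.
exact/defect_ge0/mem_Mstar_pow.
Qed.

Lemma contractively_included_of_defect_ge0 : contractively_included ipY M.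
Proof.
move=> f fM.
have partial_le N : \sum_(k < N) arv_terms ipY f k <= normM f ^+ 2.
  rewrite -(energy_identity N f) -addrA lerDl addr_ge0 ?mnorm_tail_ge0 //.
  by rewrite sumr_ge0 // => k _; apply: defect_layer_ge0.
have [_ lim_le] := nneg_series_bounded_cvg (arv_terms_ge0 f) partial_le.
rewrite /arv_norm -[normM f]ger0_norm ?hnorm_ge0 // -sqrtr_sqr.
exact: ler_wsqrtr.
Qed.

End ContractiveCase.

Section IsometricCase.
Hypothesis defect_eq0 : forall f, fh_mem M f -> defect f = 0.

Lemma isometrically_included_iff_mnorm_tail_cvg0 :
  isometrically_included ipY M <->
  (forall f, fh_mem M f -> (fun N => mnorm_tail N f) @ \oo --> 0).
Proof.
have arv_norm_eqP f : fh_mem M f ->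
    arv_norm ipY f = normM f <-> (fun N => mnorm_tail N f) @ \oo --> 0.
  move=> fM; apply: sqrt_limn_series_eq_iff_cvg0.
  - exact: arv_terms_ge0.
  - exact: hnorm_ge0.
  - by move=> N; apply: mnorm_tail_ge0.
  move=> N; rewrite -(energy_identity N f).
  rewrite [\sum_(k < N) defect_layer k f]big1 ?addr0 //.
  move=> k _; rewrite /defect_layer (eq_deg_sum (G := fun=> 0)) => [|n _].
    by rewrite /deg_sum big1.
  by rewrite defect_eq0 ?mulr0 //; apply: mem_Mstar_pow.
by split=> M_prop f fM; apply/(arv_norm_eqP f fM)/M_prop.
Qed.

End IsometricCase.

End EnergyIdentity.

Section ShiftModel.
Variables (R : realType) (d : nat) (Y : lmodType R[i]) (M : fun_hilbert d Y).
Hypothesis M_Mstar : forall j f, fh_mem M f -> fh_mem M (Mstar j f).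

Definition Mpred : pred (mi d -> Y) := fun f => `[< fh_mem M f >].

Lemma Mpred_submod_closed : GRing.submod_closed Mpred.
Proof.
split=> [|a f g /asboolP fM /asboolP gM]; apply/asboolP; first exact: fh_zero.
exact: fh_lin.
Qed.

HB.instance Definition _ :=
  GRing.isSubmodClosed.Build R[i] (mi d -> Y) Mpred Mpred_submod_closed.

Record Mspace := MElem { mval : mi d -> Y; mvalP : Mpred mval }.

HB.instance Definition _ := [isSub for mval].
HB.instance Definition _ := [Choice of Mspace by <:].
HB.instance Definition _ := [SubChoice_isSubLmodule of Mspace by <:].

Lemma mem_mval (x : Mspace) : fh_mem M (mval x).
Proof. exact/asboolP/mvalP. Qed.

Definition Mip (x y : Mspace) : R[i] := fh_ip M (mval x) (mval y).

Lemma Mip_hilbert : is_hilbert Mip.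
Proof.
split; first split.
- by move=> a x y z; apply: fh_ip_lin; apply: mem_mval.
- by move=> x y; apply: fh_ip_sym; apply: mem_mval.
- by move=> x; apply: fh_ip_pos; apply: mem_mval.
- by move=> x xx0; apply: val_inj; apply: fh_ip_def xx0; apply: mem_mval.
move=> u u_cauchy.
have [v [vM u_cvg]] := fh_complete (fun k => mem_mval (u k)) u_cauchy.
by exists (MElem (asboolT vM)).
Qed.

Definition Mshift j (x : Mspace) : Mspace := MElem (asboolT (M_Mstar j (mem_mval x))).

Lemma Mshift_linear j : linear (Mshift j).
Proof. by move=> a x y; apply: val_inj; apply: Mstar_linear. Qed.

HB.instance Definition _ j :=
  GRing.isLinear.Build R[i] Mspace Mspace *:%R (Mshift j) (Mshift_linear j).

Definition Meval0 (x : Mspace) : Y := eval0 (mval x).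

Lemma Meval0_linear : linear Meval0.
Proof. by []. Qed.

HB.instance Definition _ :=
  GRing.isLinear.Build R[i] Mspace Y *:%R Meval0 Meval0_linear.

Lemma Mshift_commuting : commuting Mshift.
Proof. by move=> i j x; apply: val_inj; apply: Mstar_comm. Qed.

Lemma mval_op_pow n x : mval (op_pow Mshift n x) = Mstar_pow n (mval x).
Proof.
rewrite /op_pow /Mstar_pow; elim: (enum 'I_d) => //= j s IHs.
by elim: (n j) => //= k ->.
Qed.

Lemma obs_op_Mspace x : obs_op Mshift Meval0 x = mval x.
Proof.
apply: funext => n; rewrite /obs_op /Meval0 mval_op_pow eval0_Mstar_pow.
have weight_inv : (mi_abs n)`!%:R / (mi_fact n)%:R * arv_w R n = 1.
  by rewrite /arv_w; field; rewrite !pnatr_eq0 -!lt0n fact_gt0 mi_fact_gt0.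
by rewrite scalerA -rmorphM weight_inv scale1r.
Qed.

Lemma Mspace_exactly_observable : exactly_observable M Mip Meval0 Mshift.
Proof.
split=> [x|]; first by rewrite obs_op_Mspace; apply: mem_mval.
by exists 1, 1; do 2!split=> //; move=> x; rewrite obs_op_Mspace mul1r.
Qed.

Lemma Mspace_range_obs : range_obs M Meval0 Mshift.
Proof.
move=> f; split=> [fM | [x ->]]; last by rewrite obs_op_Mspace; apply: mem_mval.
by exists (MElem (asboolT fM)); rewrite obs_op_Mspace.
Qed.

Variable ipY : Y -> Y -> R[i].

Section ContractiveModel.
Hypothesis defect_ge0 : forall f, fh_mem M f -> 0 <= defect ipY M f.

Lemma Mspace_contractive_pair : contractive_pair ipY Mip Meval0 Mshift.
Proof. by move=> x; have := defect_ge0 (mem_mval x); rewrite /defect; lra. Qed.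

Lemma Mspace_bounded :
  (forall j, bounded_op Mip Mip (Mshift j)) /\ bounded_op Mip ipY Meval0.
Proof.
split=> [j|]; apply: bounded_op_of_sqr_le => x; have := Mspace_contractive_pair x;
  apply: le_trans.
- rewrite (bigD1 j) //= addrCA lerDl addr_ge0 ?sqr_ge0 //.
  by rewrite sumr_ge0 // => i _; rewrite sqr_ge0.
- by rewrite lerDl sumr_ge0 // => i _; rewrite sqr_ge0.
Qed.

End ContractiveModel.

Hypothesis ipY_inner : is_inner_product ipY.
Hypothesis defect_eq0 : forall f, fh_mem M f -> defect ipY M f = 0.

Lemma Mspace_isometric_pair : isometric_pair ipY Mip Meval0 Mshift.
Proof.
have [[ipX_DZl ipX_herm _ _] _] := Mip_hilbert.
have [ipY_DZl ipY_herm _ _] := ipY_inner.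
pose B x y :=
  ipY (Meval0 x) (Meval0 y) + \sum_(j < d) Mip (Mshift j x) (Mshift j y) - Mip x y.
suff B0 x y : B x y = 0 by move=> x y; apply/eqP; rewrite -subr_eq0; apply/eqP/B0.
apply: hermitian_form_eq0 => [a {}x {}y z | {}x {}y | {}x].
- rewrite /B !linearP /= ipY_DZl ipX_DZl.
  under eq_bigr => j _ do rewrite linearP ipX_DZl.
  by rewrite big_split /= -mulr_sumr; ring.
- rewrite /B ipY_herm ipX_herm.
  under eq_bigr => j _ do rewrite ipX_herm.
  by rewrite raddfB raddfD raddf_sum.
rewrite /B -(sqr_hnormC ipY_inner) -(sqr_hnormC Mip_hilbert.1).
under eq_bigr => j _ do rewrite -(sqr_hnormC Mip_hilbert.1).
rewrite -rmorph_sum -rmorphD -rmorphB.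
have := defect_eq0 (mem_mval x); rewrite /defect => defect0.
rewrite (_ : _ + _ - _ = 0 :> R) ?rmorph0 //; lra.
Qed.

End ShiftModel.

Theorem theorem3p16 (R : realType) (d : nat) (hd : (0 < d)%N)
  (Y : lmodType (R[i])) (ipY : Y -> Y -> R[i]) (hY : is_hilbert ipY)
  (M : fun_hilbert d Y)
  (hMH : forall f, fh_mem M f -> in_arveson ipY f)
  (hMinv : forall (j : 'I_d) f, fh_mem M f -> fh_mem M (Mstar j f)) :
  ((forall f, fh_mem M f ->
      \sum_(j < d) hnorm (fh_ip M) (Mstar j f) ^+ 2
        <= hnorm (fh_ip M) f ^+ 2 - hnorm ipY (eval0 f) ^+ 2) ->
    exists (X : lmodType (R[i])) (ipX : X -> X -> R[i]) (A : 'I_d -> {linear X -> X})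
           (Cop : {linear X -> Y}),
      is_hilbert ipX /\ commuting (fun j => A j : X -> X) /\
          ((forall j, bounded_op ipX ipX (A j)) /\ bounded_op ipX ipY Cop) /\
          contractive_pair ipY ipX Cop (fun j => A j) /\
          exactly_observable M ipX Cop (fun j => A j) /\
          range_obs M Cop (fun j => A j) /\
          contractively_included ipY M)
  /\
  ((forall f, fh_mem M f ->
      \sum_(j < d) hnorm (fh_ip M) (Mstar j f) ^+ 2
        = hnorm (fh_ip M) f ^+ 2 - hnorm ipY (eval0 f) ^+ 2) ->
    exists (X : lmodType (R[i])) (ipX : X -> X -> R[i]) (A : 'I_d -> {linear X -> X})
           (Cop : {linear X -> Y}),
      is_hilbert ipX /\ commuting (fun j => A j : X -> X) /\
          ((forall j, bounded_op ipX ipX (A j)) /\ bounded_op ipX ipY Cop) /\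
          isometric_pair ipY ipX Cop (fun j => A j) /\
          exactly_observable M ipX Cop (fun j => A j) /\
          range_obs M Cop (fun j => A j) /\
          (contractively_included ipY M /\
           (isometrically_included ipY M <->
            (forall f, fh_mem M f ->
               (fun N : nat => deg_sum N (fun n =>
                  ((N`!)%:R / (mi_fact n)%:R) *
                  hnorm (fh_ip M) (Mstar_pow n f) ^+ 2)) @ \oo --> (0 : R))))).
Proof.
have [ipY_inner _] := hY.
pose A j : {linear Mspace M -> Mspace M} := Mshift hMinv j.
split=> [contractive | isometric].
  have defect_ge0 f : fh_mem M f -> 0 <= defect ipY M f.
    by move=> /contractive; rewrite /defect subr_ge0.
  exists (Mspace M), (@Mip _ _ _ M), A, (@Meval0 _ _ _ M).
  split; first exact: Mip_hilbert.
  split; first exact: Mshift_commuting.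
  split; first exact (Mspace_bounded hMinv defect_ge0).
  split; first exact: Mspace_contractive_pair.
  split; first exact: Mspace_exactly_observable.
  split; first exact: Mspace_range_obs.
  exact: contractively_included_of_defect_ge0 ipY_inner hMinv defect_ge0.
have defect_eq0 f : fh_mem M f -> defect ipY M f = 0.
  by move=> /isometric; rewrite /defect => ->; rewrite subrr.
have defect_ge0 f : fh_mem M f -> 0 <= defect ipY M f by move=> /defect_eq0 ->.
exists (Mspace M), (@Mip _ _ _ M), A, (@Meval0 _ _ _ M).
split; first exact: Mip_hilbert.
split; first exact: Mshift_commuting.
split; first exact (Mspace_bounded hMinv defect_ge0).
split; first exact: Mspace_isometric_pair ipY_inner defect_eq0.
split; first exact: Mspace_exactly_observable.
split; first exact: Mspace_range_obs.
split; first exact: contractively_included_of_defect_ge0 ipY_inner hMinv defect_ge0.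
exact: isometrically_included_iff_mnorm_tail_cvg0 ipY_inner hMinv defect_eq0.
Qed.
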